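(* Let $G=(V,A)$ be a weighted digraph with $V=\{1,\dots,n\}$, positive arc weights and every vertex of positive degree, and fix $p\in[1,\infty]$. Let $\Omega=\Omega_p^1\cup\Omega_p^2$ where $\Omega_p^1=\{\mathbf{x}\in\mathbb{R}^n:\max_i x_i+\min_i x_i=0,\ \|\mathbf{x}\|_p=1\}$ and $\Omega_p^2=\{\mathbf{x}\in\mathbb{R}^n:\min_i|x_i|=0,\ \|\mathbf{x}\|_p=1\}$. Starting from $\mathbf{x}^1\in\Omega$ and $r^1=r(\mathbf{x}^1)$, define iteratively $$\mathbf{x}^{k+1}\in\operatorname*{argmin}_{\mathbf{x}\in\Omega}\big\{\|\mathbf{x}\|_\infty-Q_{r^k}(\mathbf{x})\big\},\qquad r^{k+1}=r(\mathbf{x}^{k+1}).$$ Then the sequence $\{r^k\}$ converges to the global minimum $r_{\min}=\min_{\mathbf{x}\in\mathbb{R}^n\setminus\{t\mathbf{1}:t\in\mathbb{R}\}} r(\mathbf{x})$.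
   Context: For a vertex $v$, $d_v^+$ and $d_v^-$ are the total weights of arcs leaving and entering $v$; $d_v=d_v^++d_v^-$, $d_v^\delta=d_v^+-d_v^-$, $\mathrm{Vol}(V)=\sum_{v}d_v$. For $\mathbf{x}\in\mathbb{R}^n$: $I^+(\mathbf{x})=\sum_{i\to j\in A}w_{ij}|x_i+x_j|$, $J(\mathbf{x})=|\sum_{i\in V}d_i^\delta x_i|$, $N(\mathbf{x})=\min_{c\in\mathbb{R}}\sum_{i\in V}d_i|x_i-c|$; for non-constant $\mathbf{x}$, $r(\mathbf{x})=\frac{\mathrm{Vol}(V)\|\mathbf{x}\|_\infty-I^+(\mathbf{x})-J(\mathbf{x})}{2N(\mathbf{x})}$; and for $r\in\mathbb{R}$, $Q_r(\mathbf{x})=\frac{I^+(\mathbf{x})+J(\mathbf{x})+2rN(\mathbf{x})}{\mathrm{Vol}(V)}$. (Vectors in $\Omega$ are non-constant.) *)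

From HB Require Import structures.
From mathcomp Require Import all_boot all_order all_algebra.
From mathcomp Require Import all_classical all_reals all_analysis.
Set Implicit Arguments. Unset Strict Implicit. Unset Printing Implicit Defensive.
Import Order.TTheory GRing.Theory Num.Theory.
Import numFieldNormedType.Exports.
Local Open Scope ring_scope.
Local Open Scope classical_set_scope.

Section Digraph.
Variables (R : realType) (n : nat).
(* weighted digraph on V = 'I_n : w i j > 0 iff i -> j is an arc (of weight w i j),
   w i j = 0 iff there is no arc *)
Variable w : 'I_n -> 'I_n -> R.

Definition dout (v : 'I_n) : R := \sum_(j < n) w v j.
Definition din (v : 'I_n) : R := \sum_(i < n) w i v.
Definition deg (v : 'I_n) : R := dout v + din v.
Definition ddelta (v : 'I_n) : R := dout v - din v.
Definition Vol : R := \sum_(v < n) deg v.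

Definition Iplus (x : 'I_n -> R) : R :=
  \sum_(i < n) \sum_(j < n) w i j * `|x i + x j|.
Definition Jf (x : 'I_n -> R) : R := `|\sum_(i < n) ddelta i * x i|.
Definition Nf (x : 'I_n -> R) : R :=
  inf (range (fun c : R => \sum_(i < n) deg i * `|x i - c|)).

Definition ninf (x : 'I_n -> R) : R := \big[Num.max/0]_(i < n) `|x i|.

Definition rfun (x : 'I_n -> R) : R :=
  (Vol * ninf x - Iplus x - Jf x) / (2 * Nf x).
Definition Qfun (r : R) (x : 'I_n -> R) : R :=
  (Iplus x + Jf x + 2 * r * Nf x) / Vol.
End Digraph.

Definition nonconstant (R : realType) (n : nat) (x : 'I_n -> R) : Prop :=
  ~ (exists t : R, forall i, x i = t).

(* p-norm, p in [1, +oo] encoded as an extended real *)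
Definition pnorm (R : realType) (n : nat) (p : \bar R) (x : 'I_n -> R) : R :=
  match p with
  | EFin q => (\sum_(i < n) `|x i| `^ q) `^ q^-1
  | _ => ninf x
  end.

Definition is_maxv (R : realType) (n : nat) (x : 'I_n -> R) (m : R) : Prop :=
  (exists i, x i = m) /\ (forall i, x i <= m).
Definition is_minv (R : realType) (n : nat) (x : 'I_n -> R) (m : R) : Prop :=
  (exists i, x i = m) /\ (forall i, m <= x i).

Definition Omega1 (R : realType) (n : nat) (p : \bar R) : set ('I_n -> R) :=
  [set x | (exists M m, is_maxv x M /\ is_minv x m /\ M + m = 0) /\ pnorm p x = 1].
Definition Omega2 (R : realType) (n : nat) (p : \bar R) : set ('I_n -> R) :=
  [set x | is_minv (fun i => `|x i|) 0 /\ pnorm p x = 1].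
Definition Omega (R : realType) (n : nat) (p : \bar R) : set ('I_n -> R) :=
  Omega1 p `|` Omega2 p.

From HB Require Import structures.
From mathcomp Require Import all_boot all_order all_algebra.
From mathcomp Require Import all_classical all_reals all_analysis.
From mathcomp Require Import ring lra.
Set Implicit Arguments. Unset Strict Implicit. Unset Printing Implicit Defensive.
Import Order.TTheory GRing.Theory Num.Theory.
Import numFieldNormedType.Exports.
Local Open Scope ring_scope.
Local Open Scope classical_set_scope.

(* Write N for Nf.  For non-constant y, ‖y‖∞ − Q_r(y) = 2 N(y) (r(y) − r) / Vol,
   so the minimality of x^{k+1}, tested against x^k, gives r^{k+1} ≤ r^k.
   The function r is invariant under positive scaling and does not increase
   when y is translated so that max y + min y = 0; hence its infimum over
   non-constant vectors is a minimum over the compact set of such centred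
   vectors with ‖y‖∞ = 1 (on which N is bounded below by the least degree),
   and it is attained at some z ∈ Ω.  Testing the minimality of x^{k+1}
   against z, and using N(x^{k+1}) ≤ Vol ‖x^{k+1}‖∞ ≤ Vol, gives
   (N(z)/Vol) (r^k − r_min) ≤ r^k − r^{k+1}: the gap to r_min shrinks by a
   fixed factor at each step. *)

Lemma cvg_linear_decrease (R : realType) (u : R ^nat) (l c : R) :
  0 < c -> (forall k, l <= u k) -> (forall k, c * (u k - l) <= u k - u k.+1) ->
  u @ \oo --> l.
Proof.
move=> c_gt0 u_ge gap.
have u_decr : nonincreasing_seq u.
  apply: (proj1 (nonincreasing_seqP u)) => k; rewrite -subr_ge0 (le_trans _ (gap k)) //.
  by rewrite mulr_ge0 ?subr_ge0 ?u_ge ?(ltW c_gt0).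
have /cvg_ex[L uL] : cvgn u.
  by apply: nonincreasing_is_cvgn => //; exists l => _ [k _ <-].
have gap_cvg : (fun k => (u k - u k.+1) / c) @ \oo --> 0.
  rewrite -(mul0r c^-1) -(subrr L).
  by apply: (cvgM (cvgB uL _) (cvg_cst _)); rewrite cvg_shiftS.
have bound_cvg : (fun k => l + (u k - u k.+1) / c) @ \oo --> l.
  by rewrite -[X in _ --> X]addr0; exact: cvgD (cvg_cst l) gap_cvg.
apply: (squeeze_cvgr _ (cvg_cst l) bound_cvg); apply: nearW => k.
by rewrite u_ge /= -lerBlDl ler_pdivlMr // mulrC gap.
Qed.

Lemma lipschitz_continuous (R : realFieldType) (V : normedModType R) (f : V -> R) L :
  0 <= L -> (forall u v, f u <= f v + L * `|u - v|) -> continuous f.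
Proof.
move=> L_ge0 f_lip v; apply/cvgrPdist_le => e e_gt0.
apply/nbhs_ballP; exists (e / (L + 1)) => /=; first by rewrite divr_gt0 // ltr_wpDl.
move=> t; rewrite -ball_normE /= => vt.
have Lvt : L * `|v - t| <= e.
  rewrite (le_trans (ler_wpM2l L_ge0 (ltW vt))) // mulrA ler_pdivrMr ?ltr_wpDl //.
  by rewrite mulrC ler_wpM2l ?ltW //; lra.
have := f_lip v t; have := f_lip t v; rewrite distrC => ft fv.
by rewrite ler_norml; apply/andP; split; lra.
Qed.

Section SupNorm.
Variables (R : realType) (n : nat).
Implicit Types x y : 'I_n -> R.

Lemma le_ninf x i : `|x i| <= ninf x.
Proof. exact: le_bigmax. Qed.

Lemma ninf_le x t : 0 <= t -> (forall i, `|x i| <= t) -> ninf x <= t.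
Proof. by move=> t_ge0 xt; apply: bigmax_le. Qed.

Lemma ninf_ge0 x : 0 <= ninf x.
Proof. by rewrite /ninf; elim/big_ind: _ => // a b a_ge0 _; rewrite le_max a_ge0. Qed.

Lemma ninf_scale x l : 0 < l -> ninf (fun i => l * x i) = l * ninf x.
Proof.
move=> l_gt0; apply/le_anti/andP; split.
  apply: ninf_le => [|i]; first by rewrite mulr_ge0 ?ninf_ge0 ?ltW.
  by rewrite normrM gtr0_norm // ler_wpM2l ?le_ninf ?ltW.
rewrite -ler_pdivlMl //; apply: ninf_le => [|i].
  by rewrite mulr_ge0 ?ninf_ge0 ?invr_ge0 ?ltW.
rewrite ler_pdivlMl // -[l in l * _]gtr0_norm // -normrM.
exact: (le_ninf (fun i => l * x i)).
Qed.

Lemma ninf_lipschitz x y d :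
  0 <= d -> (forall i, `|x i - y i| <= d) -> ninf x <= ninf y + d.
Proof.
move=> d_ge0 xy; apply: ninf_le => [|i]; first by rewrite addr_ge0 ?ninf_ge0.
have -> : x i = y i + (x i - y i) by ring.
by rewrite (le_trans (ler_normD _ _)) // lerD ?le_ninf ?xy.
Qed.

Lemma nonconstant_lt x : nonconstant x -> exists a b, x a < x b.
Proof.
move=> ncx; apply: contrapT => no_lt; apply: ncx.
have [[a _]|no_index] := pselect (exists i : 'I_n, True); last first.
  by exists 0 => i; exfalso; apply: no_index; exists i.
exists (x a) => i; apply/le_anti/andP; split; rewrite leNgt; apply/negP => lt.
  by apply: no_lt; exists a, i.
by apply: no_lt; exists i, a.
Qed.

Lemma ninf_gt0 x : nonconstant x -> 0 < ninf x.
Proof.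
move=> ncx; rewrite lt_def ninf_ge0 andbT; apply/negP => /eqP ninf0; apply: ncx.
by exists 0 => i; apply/eqP; rewrite -normr_le0 -ninf0 le_ninf.
Qed.

Section PNorm.
Variable p : \bar R.
Hypothesis p_ge1 : (1 <= p)%E.

Lemma ninf_le_pnorm x : ninf x <= pnorm p x.
Proof.
case: p p_ge1 => [q| |] //=; rewrite ?lee_fin => q_ge1.
have q_gt0 : 0 < q by lra.
apply: ninf_le => [|i]; first exact: powR_ge0.
rewrite -[X in X <= _](@powRr1 _ `|x i|) // -(divff (lt0r_neq0 q_gt0)) powRrM.
have sum_ge0 : 0 <= \sum_(j < n) `|x j| `^ q.
  by apply: sumr_ge0 => j _; exact: powR_ge0.
apply: ge0_ler_powR; rewrite ?nnegrE ?powR_ge0 //; first by rewrite invr_ge0 ltW.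
by rewrite (bigD1 i) //= lerDl; apply: sumr_ge0 => j _; exact: powR_ge0.
Qed.

Lemma pnorm_scale x l : 0 < l -> pnorm p (fun i => l * x i) = l * pnorm p x.
Proof.
move=> l_gt0; case: p p_ge1 => [q| |] //=; rewrite ?lee_fin => q_ge1; last first.
  exact: ninf_scale.
have q_gt0 : 0 < q by lra.
have -> : \sum_(i < n) `|l * x i| `^ q = l `^ q * \sum_(i < n) `|x i| `^ q.
  rewrite mulr_sumr; apply: eq_bigr => i _.
  by rewrite normrM gtr0_norm // powRM // ltW.
rewrite powRM ?powR_ge0 //; last by apply: sumr_ge0 => i _; exact: powR_ge0.
by rewrite -powRrM divff ?gt_eqF // powRr1 // ltW.
Qed.

Lemma pnorm0 : pnorm p (fun _ : 'I_n => 0) = 0.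
Proof.
have := pnorm_scale (fun _ => 0) (ltr0Sn R 1).
have -> : (fun _ : 'I_n => 2%:R * (0 : R)) = (fun _ => 0).
  by apply: funext => i; rewrite mulr0.
lra.
Qed.

Lemma Omega_pnorm y : y \in Omega p -> pnorm p y = 1.
Proof. by rewrite in_setE => -[[_ ->]|[_ ->]]. Qed.

Lemma Omega_ninf_le1 y : y \in Omega p -> ninf y <= 1.
Proof. by move=> yO; rewrite -(Omega_pnorm yO) ninf_le_pnorm. Qed.

Lemma Omega_nonconstant y : y \in Omega p -> nonconstant y.
Proof.
move=> yO [t yt]; have yE : y = fun=> t by apply: funext.
have t0 : t = 0.
  move: yO; rewrite in_setE yE => -[[[M [m [[[i <-] _] [[[j <-] _] sum0]]]] _]|].
    by lra.
  by move=> [[[i /normr0_eq0]]].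
by have := Omega_pnorm yO; rewrite yE t0 pnorm0 // => /eqP; rewrite eq_sym oner_eq0.
Qed.

End PNorm.
End SupNorm.

Definition centered (R : realType) (n : nat) (x : 'I_n -> R) : Prop :=
  exists M m, is_maxv x M /\ is_minv x m /\ M + m = 0.

Lemma centered_scale (R : realType) (n : nat) (x : 'I_n -> R) l :
  0 < l -> centered x -> centered (fun i => l * x i).
Proof.
move=> l_gt0 [M [m [[[i xi] xM] [[[j xj] xm] Mm]]]].
exists (l * M), (l * m); split; [|split].
- by split; [exists i; rewrite xi | move=> k; rewrite ler_wpM2l ?xM ?ltW].
- by split; [exists j; rewrite xj | move=> k; rewrite ler_wpM2l ?xm ?ltW].
- by rewrite -mulrDr Mm mulr0.
Qed.

Section Digraph.
Variables (R : realType) (n : nat) (w : 'I_n -> 'I_n -> R).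
Hypothesis w_ge0 : forall i j, 0 <= w i j.
Hypothesis deg_gt0 : forall v, 0 < deg w v.
Implicit Types x y z : 'I_n -> R.

Definition absdev x (c : R) := \sum_(i < n) deg w i * `|x i - c|.

Definition deg_min := \big[Num.min/1]_(i < n) deg w i.

Definition rnum x := Vol w * ninf x - Iplus w x - Jf w x.

Lemma deg_ge0 i : 0 <= deg w i.
Proof. exact: ltW. Qed.

Lemma Vol_ge0 : 0 <= Vol w.
Proof. by apply: sumr_ge0 => i _; exact: deg_ge0. Qed.

Lemma Vol_gt0 (a : 'I_n) : 0 < Vol w.
Proof.
rewrite /Vol (bigD1 a) //= (lt_le_trans (deg_gt0 a)) // lerDl.
by apply: sumr_ge0 => i _; exact: deg_ge0.
Qed.

Lemma VolE : Vol w = 2 * \sum_(i < n) \sum_(j < n) w i j.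
Proof.
by rewrite /Vol /deg big_split /= /dout /din [X in _ + X]exchange_big /=; ring.
Qed.

Lemma sum_ddelta : \sum_(i < n) ddelta w i = 0.
Proof. by rewrite /ddelta sumrB /dout /din [X in _ - X]exchange_big /= subrr. Qed.

Lemma deg_min_gt0 : 0 < deg_min.
Proof. by apply: lt_bigmin => // i _; exact: deg_gt0. Qed.

Lemma deg_min_le i : deg_min <= deg w i.
Proof. exact: bigmin_le. Qed.

Lemma absdev_ge0 x c : 0 <= absdev x c.
Proof. by apply: sumr_ge0 => i _; rewrite mulr_ge0 ?deg_ge0. Qed.

Lemma absdev_shift x t c : absdev (fun i => x i - t) c = absdev x (c + t).
Proof. by apply: eq_bigr => i _; rewrite opprD addrA addrAC. Qed.

Lemma absdev_scale x l c :
  0 <= l -> absdev (fun i => l * x i) (l * c) = l * absdev x c.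
Proof.
move=> l_ge0; rewrite /absdev mulr_sumr; apply: eq_bigr => i _.
by rewrite -mulrBr normrM ger0_norm // mulrCA.
Qed.

Lemma Nf_le_absdev x c : Nf w x <= absdev x c.
Proof.
apply: ge_inf; last by exists c.
by exists 0 => _ [d _ <-]; exact: absdev_ge0.
Qed.

Lemma le_Nf x a : (forall c, a <= absdev x c) -> a <= Nf w x.
Proof.
move=> a_le; apply: lb_le_inf; first by exists (absdev x 0), 0.
by move=> _ [c _ <-]; exact: a_le.
Qed.

Lemma Nf_ge0 x : 0 <= Nf w x.
Proof. by apply: le_Nf => c; exact: absdev_ge0. Qed.

Lemma Nf_shift x t : Nf w (fun i => x i - t) = Nf w x.
Proof.
apply/le_anti/andP; split; apply: le_Nf => c.
  by rewrite -[c](subrK t) -absdev_shift Nf_le_absdev.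
by rewrite absdev_shift Nf_le_absdev.
Qed.

Lemma Nf_scale x l : 0 < l -> Nf w (fun i => l * x i) = l * Nf w x.
Proof.
move=> l_gt0; apply/le_anti/andP; split.
  rewrite -ler_pdivrMl //; apply: le_Nf => c.
  by rewrite ler_pdivrMl // -absdev_scale ?(ltW l_gt0) // Nf_le_absdev.
apply: le_Nf => c; rewrite -[c](mulVKf (lt0r_neq0 l_gt0)) absdev_scale ?(ltW l_gt0) //.
by rewrite ler_wpM2l ?(ltW l_gt0) ?Nf_le_absdev.
Qed.

Lemma Nf_const t : Nf w (fun=> t) = 0.
Proof.
apply/le_anti; rewrite Nf_ge0 andbT (le_trans (Nf_le_absdev _ t)) //.
by rewrite /absdev big1 // => i _; rewrite subrr normr0 mulr0.
Qed.

Lemma Nf_ge_dist x a b : deg_min * `|x a - x b| / 2 <= Nf w x.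
Proof.
apply: le_Nf => c; rewrite ler_pdivrMr //.
have dev_le i : deg_min * `|x i - c| <= absdev x c.
  rewrite (le_trans (ler_wpM2r (normr_ge0 _) (deg_min_le i))) //.
  rewrite /absdev (bigD1 i) //= lerDl.
  by apply: sumr_ge0 => j _; rewrite mulr_ge0 ?deg_ge0.
have triangle : `|x a - x b| <= `|x a - c| + `|x b - c|.
  by rewrite (distrC (x b)); exact: ler_distD.
have := dev_le a; have := dev_le b.
have := ler_wpM2l (ltW deg_min_gt0) triangle; rewrite mulrDr; lra.
Qed.

Lemma Nf_gt0 x : nonconstant x -> 0 < Nf w x.
Proof.
move=> /nonconstant_lt [a [b ab]]; apply: lt_le_trans (Nf_ge_dist x a b).
by rewrite divr_gt0 // mulr_gt0 ?deg_min_gt0 // normr_gt0 subr_eq0 lt_eqF.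
Qed.

Lemma nonconstant_Nf_gt0 x : 0 < Nf w x -> nonconstant x.
Proof.
move=> Nx_gt0 [t xt]; have xE : x = fun=> t by apply: funext.
by move: Nx_gt0; rewrite xE Nf_const ltxx.
Qed.

Lemma Nf_le_Vol_ninf x : Nf w x <= Vol w * ninf x.
Proof.
rewrite (le_trans (Nf_le_absdev x 0)) // /absdev /Vol mulr_suml.
by apply: ler_sum => i _; rewrite subr0 ler_wpM2l ?deg_ge0 ?le_ninf.
Qed.

Lemma Nf_lipschitz x y d : (forall i, `|x i - y i| <= d) ->
  Nf w x <= Nf w y + Vol w * d.
Proof.
move=> xy; rewrite -lerBlDr; apply: le_Nf => c; rewrite lerBlDr.
rewrite (le_trans (Nf_le_absdev x c)) // /absdev /Vol mulr_suml -big_split /=.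
apply: ler_sum => i _; rewrite -mulrDr ler_wpM2l ?deg_ge0 //.
have -> : x i - c = (y i - c) + (x i - y i) by ring.
by rewrite (le_trans (ler_normD _ _)) // lerD2l xy.
Qed.

Lemma Iplus_scale x l : 0 <= l -> Iplus w (fun i => l * x i) = l * Iplus w x.
Proof.
move=> l_ge0; rewrite /Iplus mulr_sumr; apply: eq_bigr => i _.
rewrite mulr_sumr; apply: eq_bigr => j _.
by rewrite -mulrDr normrM ger0_norm // mulrCA.
Qed.

Lemma Iplus_lipschitz x y d : (forall i, `|x i - y i| <= d) ->
  Iplus w x <= Iplus w y + Vol w * d.
Proof.
move=> xy; have -> : Vol w * d = \sum_i \sum_j w i j * (2 * d).
  rewrite VolE mulrAC mulr_sumr; apply: eq_bigr => i _.
  by rewrite mulr_sumr; apply: eq_bigr => j _; rewrite mulrC.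
rewrite /Iplus -big_split /=; apply: ler_sum => i _.
rewrite -big_split /=; apply: ler_sum => j _; rewrite -mulrDr ler_wpM2l ?w_ge0 //.
have -> : x i + x j = (y i + y j) + ((x i - y i) + (x j - y j)) by ring.
rewrite (le_trans (ler_normD _ _)) // lerD2l (le_trans (ler_normD _ _)) //.
by have := xy i; have := xy j; lra.
Qed.

Lemma Jf_scale x l : 0 <= l -> Jf w (fun i => l * x i) = l * Jf w x.
Proof.
move=> l_ge0; rewrite /Jf -(ger0_norm l_ge0) -normrM mulr_sumr; congr `|_|.
by apply: eq_bigr => i _; rewrite (ger0_norm l_ge0) mulrCA.
Qed.

Lemma Jf_shift x t : Jf w (fun i => x i - t) = Jf w x.
Proof.
rewrite /Jf; under eq_bigr do rewrite mulrBr.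
by rewrite sumrB -mulr_suml sum_ddelta mul0r subr0.
Qed.

Lemma Jf_lipschitz x y d : (forall i, `|x i - y i| <= d) ->
  Jf w x <= Jf w y + (\sum_(i < n) `|ddelta w i|) * d.
Proof.
move=> xy; rewrite /Jf mulr_suml.
have -> : \sum_i ddelta w i * x i =
    \sum_i ddelta w i * y i + \sum_i ddelta w i * (x i - y i).
  by rewrite -big_split; apply: eq_bigr => i _ /=; ring.
rewrite (le_trans (ler_normD _ _)) // lerD2l (le_trans (ler_norm_sum _ _ _)) //.
by apply: ler_sum => i _; rewrite normrM ler_wpM2l ?xy.
Qed.

Lemma rfun_scale x l : 0 < l -> rfun w (fun i => l * x i) = rfun w x.
Proof.
move=> l_gt0; rewrite /rfun ninf_scale ?Iplus_scale ?Jf_scale ?Nf_scale ?(ltW l_gt0) //.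
have -> : Vol w * (l * ninf x) - l * Iplus w x - l * Jf w x = l * rnum x.
  by rewrite /rnum; ring.
have -> : 2 * (l * Nf w x) = l * (2 * Nf w x) by ring.
by rewrite invfM mulrACA divff ?gt_eqF // mul1r.
Qed.

Lemma rfun_shift_le x h : ninf (fun i => x i - h) + `|h| <= ninf x ->
  rfun w (fun i => x i - h) <= rfun w x.
Proof.
move=> ninf_shift; rewrite /rfun Nf_shift Jf_shift.
apply: ler_wpM2r; first by rewrite invr_ge0 mulr_ge0 ?Nf_ge0.
rewrite lerD2r.
have Ix := @Iplus_lipschitz x (fun i => x i - h) `|h|.
have Vninf := ler_wpM2l Vol_ge0 ninf_shift.
have : Iplus w x <= Iplus w (fun i => x i - h) + Vol w * `|h|.
  by apply: Ix => i; rewrite opprB addrC subrK lexx.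
by rewrite mulrDr in Vninf; lra.
Qed.

Lemma exists_centered x : nonconstant x ->
  exists y, [/\ centered y, nonconstant y & rfun w y <= rfun w x].
Proof.
move=> ncx; have [a _] := nonconstant_lt ncx.
have [iM _ xM] := @arg_maxP _ _ _ a predT x isT.
have [im _ xm] := @arg_minP _ _ _ a predT x isT.
have {}xM i : x i <= x iM := xM i isT.
have {}xm i : x im <= x i := xm i isT.
set M := x iM in xM *; set m := x im in xm *; set h := (M + m) / 2.
exists (fun i => x i - h); split.
- exists (M - h), (m - h); split; [|split].
  + by split; [exists iM | move=> i; rewrite lerD2r xM].
  + by split; [exists im | move=> i; rewrite lerD2r xm].
  + by rewrite /h; field.
- by move=> [t xt]; apply: ncx; exists (t + h) => i; rewrite -(xt i) subrK.
apply: rfun_shift_le.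
have ninf_shift : ninf (fun i => x i - h) <= (M - m) / 2.
  apply: ninf_le => [|i].
    by have := xm iM; rewrite -/M; lra.
  by rewrite ler_norml; have := xM i; have := xm i; rewrite /h => ? ?; apply/andP; split; lra.
have : `|h| <= ninf x - (M - m) / 2.
  have := le_ninf x iM; have := le_ninf x im; rewrite -/M -/m !ler_norml.
  by move=> /andP[? ?] /andP[? ?]; rewrite /h; apply/andP; split; lra.
lra.
Qed.

Lemma centered_ninf y M m : is_maxv y M -> is_minv y m -> M + m = 0 ->
  ninf y = M.
Proof.
move=> [[i yi] yM] [_ ym] Mm; apply/le_anti/andP; split.
  apply: ninf_le => [|j]; first by have := ym i; rewrite yi; lra.
  by rewrite ler_norml; have := yM j; have := ym j; move=> ? ?; apply/andP; split; lra.
by rewrite -yi (le_trans (ler_norm _) (le_ninf _ _)).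
Qed.

Lemma centered_Nf_ge y M m : is_maxv y M -> is_minv y m -> M + m = 0 ->
  deg_min * M <= Nf w y.
Proof.
move=> [[i yi] _] [[j yj] ym] Mm; have := Nf_ge_dist y i j; rewrite yi yj.
have -> : m = - M by lra.
have M_ge0 : 0 <= M by have := ym i; rewrite yi; lra.
by rewrite opprK ger0_norm ?addr_ge0 // mulrDr; lra.
Qed.

Lemma exists_normalized x : nonconstant x -> exists y,
  [/\ ninf y = 1, deg_min <= Nf w y, rfun w y <= rfun w x & centered y].
Proof.
move=> /exists_centered [y [[M [m [yM [ym Mm]]]] ncy ryx]].
have ninfy : ninf y = M := centered_ninf yM ym Mm.
have M_gt0 : 0 < M by rewrite -ninfy ninf_gt0.
exists (fun i => M^-1 * y i); split.
- by rewrite ninf_scale ?invr_gt0 // ninfy mulVf ?gt_eqF.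
- rewrite Nf_scale ?invr_gt0 // ler_pdivlMl // mulrC.
  exact: centered_Nf_ge yM ym Mm.
- by rewrite rfun_scale ?invr_gt0.
- by apply: centered_scale; rewrite ?invr_gt0 //; exists M, m.
Qed.

Lemma centered_Omega (p : \bar R) y : (1 <= p)%E -> nonconstant y -> centered y ->
  exists2 z, z \in Omega p & rfun w z = rfun w y.
Proof.
move=> p_ge1 ncy cy; have py_gt0 : 0 < pnorm p y.
  exact: lt_le_trans (ninf_gt0 ncy) (ninf_le_pnorm p_ge1 y).
exists (fun i => (pnorm p y)^-1 * y i); last by rewrite rfun_scale ?invr_gt0.
rewrite in_setE; left; split; first by apply: centered_scale; rewrite ?invr_gt0.
by rewrite pnorm_scale ?invr_gt0 // mulVf ?gt_eqF.
Qed.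

Definition vec (v : 'rV[R]_n) : 'I_n -> R := fun i => v ord0 i.

Lemma vec_row x : vec (\row_i x i) = x.
Proof. by apply: funext => i; rewrite /vec mxE. Qed.

Lemma vec_dist_le (u v : 'rV[R]_n) i : `|vec u i - vec v i| <= `|u - v|.
Proof.
have -> : vec u i - vec v i = (u - v) ord0 i by rewrite !mxE.
rewrite [X in _ <= X]/Num.norm /= mx_normrE.
exact: (le_bigmax _ (fun ij : 'I_1 * 'I_n => `|(u - v) ij.1 ij.2|) (ord0, i)).
Qed.

Lemma norm_le_ninf_vec (v : 'rV[R]_n) : `|v| <= ninf (vec v).
Proof.
rewrite [X in X <= _]/Num.norm /= mx_normrE; apply: bigmax_le => [|[i j] _].
  exact: ninf_ge0.
by rewrite (ord1 i); exact: (le_ninf (vec v) j).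
Qed.

Lemma ninf_vec_continuous : continuous (fun v : 'rV[R]_n => ninf (vec v)).
Proof.
apply: (@lipschitz_continuous _ _ _ 1) => // u v; rewrite mul1r.
by apply: ninf_lipschitz => // i; exact: vec_dist_le.
Qed.

Lemma Nf_vec_continuous : continuous (fun v : 'rV[R]_n => Nf w (vec v)).
Proof.
apply: (@lipschitz_continuous _ _ _ (Vol w)) => [|u v]; first exact: Vol_ge0.
by apply: Nf_lipschitz => i; exact: vec_dist_le.
Qed.

Lemma rnum_vec_continuous : continuous (fun v : 'rV[R]_n => rnum (vec v)).
Proof.
pose L := 2 * Vol w + \sum_(i < n) `|ddelta w i|.
apply: (@lipschitz_continuous _ _ _ L) => [|u v].
  by rewrite addr_ge0 ?mulr_ge0 ?Vol_ge0 ?sumr_ge0.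
have vu i : `|vec v i - vec u i| <= `|u - v| by rewrite distrC vec_dist_le.
have I_vu := Iplus_lipschitz vu; have J_vu := Jf_lipschitz vu.
have := ler_wpM2l Vol_ge0 (ninf_lipschitz (normr_ge0 _) (vec_dist_le u v)).
by rewrite /rnum /L !mulrDr !mulrDl; lra.
Qed.

Lemma rfun_vec_continuous_at (v : 'rV[R]_n) : Nf w (vec v) != 0 ->
  {for v, continuous (fun v : 'rV[R]_n => rfun w (vec v))}.
Proof.
move=> Nv_neq0; apply: continuousM; first exact: rnum_vec_continuous.
apply: continuousV; first by rewrite mulf_neq0.
by apply: continuousM; [exact: cst_continuous | exact: Nf_vec_continuous].
Qed.

Definition normalized_set := [set v : 'rV[R]_n | ninf (vec v) = 1] `&`
                             [set v | deg_min <= Nf w (vec v)].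

Lemma normalized_set_compact : compact normalized_set.
Proof.
apply: bounded_closed_compact.
  rewrite /= /bounded_near; near=> M => v [ninfv _] /=.
  rewrite (le_trans (norm_le_ninf_vec v)) // ninfv.
  by near: M; apply: nbhs_pinfty_ge; exact: num_real.
apply: closedI.
  apply: (@preimage_closed _ _ (fun v => ninf (vec v)) [set x | x = 1]).
    by move=> v _; exact: ninf_vec_continuous.
  exact: closed_eq.
apply: (@preimage_closed _ _ (fun v => Nf w (vec v)) [set x | deg_min <= x]).
  by move=> v _; exact: Nf_vec_continuous.
exact: closed_ge.
Unshelve. all: by end_near. Qed.

Lemma exists_rfun_minimizer x0 : nonconstant x0 ->
  exists2 z, nonconstant z & forall y, nonconstant y -> rfun w z <= rfun w y.
Proof.
move=> ncx0; have [y0 [ninfy0 Ny0 _ _]] := exists_normalized ncx0.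
have D0 : normalized_set !=set0.
  by exists (\row_i y0 i); split; rewrite /= vec_row.
have r_cont : {within normalized_set, continuous (fun v => rfun w (vec v))}.
  apply: continuous_in_subspaceT => v /set_mem [_ Nv].
  by apply: rfun_vec_continuous_at; rewrite gt_eqF // (lt_le_trans deg_min_gt0).
have [c /set_mem [_ Nc] c_min] := EVT_min_rV D0 normalized_set_compact r_cont.
exists (vec c); first exact/nonconstant_Nf_gt0/(lt_le_trans deg_min_gt0 Nc).
move=> y ncy; have [y' [ninfy' Ny' ry'y _]] := exists_normalized ncy.
apply: le_trans ry'y; have := c_min (\row_i y' i); rewrite vec_row; apply.
by rewrite in_setE; split; rewrite /= vec_row.
Qed.

Lemma Omega_rfun_minimizer (p : \bar R) x0 : (1 <= p)%E -> nonconstant x0 ->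
  exists2 z, z \in Omega p & forall y, nonconstant y -> rfun w z <= rfun w y.
Proof.
move=> p_ge1 /exists_rfun_minimizer [z ncz z_min].
have [y [_ Ny ryz cy]] := exists_normalized ncz.
have ncy := nonconstant_Nf_gt0 (lt_le_trans deg_min_gt0 Ny).
have [z' z'O rz'] := centered_Omega p_ge1 ncy cy.
exists z' => // t nct; rewrite rz' (le_trans ryz) ?z_min //.
Qed.

Lemma ninf_sub_Qfun y r : nonconstant y ->
  ninf y - Qfun w r y = 2 * Nf w y * (rfun w y - r) / Vol w.
Proof.
move=> ncy; have [a _] := nonconstant_lt ncy.
have Vol_neq0 := gt_eqF (Vol_gt0 a); have Ny_neq0 := gt_eqF (Nf_gt0 ncy).
by rewrite /Qfun /rfun; field; rewrite Vol_neq0 Ny_neq0.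
Qed.

Lemma rfun_drop_of_argmin (p : \bar R) y y' : (1 <= p)%E ->
  y \in Omega p -> y' \in Omega p ->
  (forall z, z \in Omega p ->
     ninf y' - Qfun w (rfun w y) y' <= ninf z - Qfun w (rfun w y) z) ->
  forall z, z \in Omega p ->
  Nf w z / Vol w * (rfun w y - rfun w z) <= rfun w y - rfun w y'.
Proof.
move=> p_ge1 yO y'O y'_min z zO.
have nc (u : 'I_n -> R) (uO : u \in Omega p) : nonconstant u := Omega_nonconstant p_ge1 uO.
have [a _] := nonconstant_lt (nc _ yO); have Vol_pos := Vol_gt0 a.
have drop_le u : u \in Omega p ->
    Nf w u * (rfun w y - rfun w u) <= Nf w y' * (rfun w y - rfun w y').
  move=> uO; have := y'_min _ uO.
  rewrite (ninf_sub_Qfun _ (nc _ uO)) (ninf_sub_Qfun _ (nc _ y'O)).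
  rewrite ler_pM2r ?invr_gt0 // -!mulrA ler_pM2l // => y'_le.
  by rewrite !mulrBr in y'_le *; lra.
have drop_ge0 : 0 <= rfun w y - rfun w y'.
  by have := drop_le _ yO; rewrite subrr mulr0 pmulr_rge0 ?(Nf_gt0 (nc _ y'O)).
rewrite mulrAC ler_pdivrMr // (le_trans (drop_le _ zO)) // mulrC ler_wpM2l //.
rewrite (le_trans (Nf_le_Vol_ninf y')) //.
by rewrite ler_piMr ?(ltW Vol_pos) ?(Omega_ninf_le1 p_ge1 y'O).
Qed.

End Digraph.

Theorem theorem3p1 (R : realType) (n : nat) (w : 'I_n -> 'I_n -> R)
  (p : \bar R) (x : nat -> 'I_n -> R) :
  (forall i j, 0 <= w i j) ->
  (forall v, 0 < deg w v) ->
  (1 <= p)%E ->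
  x 0%N \in Omega p ->
  (forall k : nat,
     x k.+1 \in Omega p /\
     (forall y, y \in Omega p ->
        ninf (x k.+1) - Qfun w (rfun w (x k)) (x k.+1)
        <= ninf y - Qfun w (rfun w (x k)) y)) ->
  exists rmin : R,
    (exists z : 'I_n -> R, nonconstant z /\ rfun w z = rmin) /\
    (forall z : 'I_n -> R, nonconstant z -> rmin <= rfun w z) /\
    (fun k => rfun w (x k)) @ \oo --> rmin.
Proof.
move=> w_ge0 deg_gt0 p_ge1 x0O x_step.
have xO k : x k \in Omega p by case: k => [|k] //; case: (x_step k).
have nc (y : 'I_n -> R) (yO : y \in Omega p) : nonconstant y := Omega_nonconstant p_ge1 yO.
have [z zO z_min] := Omega_rfun_minimizer w_ge0 deg_gt0 p_ge1 (nc _ x0O).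
exists (rfun w z); split; first by exists z; split; first exact: nc.
split => //; have [a _] := nonconstant_lt (nc _ x0O).
apply: (@cvg_linear_decrease _ _ _ (Nf w z / Vol w)).
- by rewrite divr_gt0 ?(Nf_gt0 deg_gt0 (nc _ zO)) ?(Vol_gt0 deg_gt0 a).
- by move=> k; exact: z_min (nc _ (xO k)).
- move=> k; have [_ xk_min] := x_step k.
  exact: (rfun_drop_of_argmin deg_gt0 p_ge1 (xO k) (xO k.+1) xk_min zO).
Qed.
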